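(* Let $d\ge 3$, let $\mathcal M$ be a model of $\mathrm{PQM}_d$ with domain $\mathbb M$, and let $\kappa:\mathbb M\to\mathbb H_d$ be the function such that for all $m\in\mathbb M$, $p\in\mathbb H_d$: $[m:p]^{\mathcal M}\iff\kappa(m)\le p$. Then for every $v\in\mathbb V_d$ there exists $m\in\mathbb M$ with $\kappa(m)=v$; i.e. $\mathbb V_d\subseteq\kappa(\mathbb M)$.
   Context: Notation. For $d\ge 1$, $\mathbb H_d$ is the set of complex linear subspaces of $\mathbb C^d$, ordered by inclusion $\le$, with $\top=\mathbb C^d$, $\bot=\{0\}$, $p^\bot$ the orthogonal complement, $p\wedge q=p\cap q$ and $p\vee q=p+q$. $\mathbb V_d\subseteq\mathbb H_d$ is the set of one-dimensional subspaces (rays). $\mathbb U_d$ is the set of unitary operators on $\mathbb C^d$, and for $U\in\mathbb U_d$, $p\in\mathbb H_d$, $U(p)=\{Uv: v\in p\}$. The Sasaki projection is $p\,\&\,q := q\cap(q^\bot+p)$. Subspaces $p,q$ are compatible iff $p=(p\wedge q)\vee(p\wedge q^\bot)$. Language $\mathcal L_d$: a first-order language without equality and without constants, having a unary function symbol $u_U$ for each $U\in\mathbb U_d$, a unary function symbol $\pi_q$ for each $q\in\mathbb H_d$, and a unary relation symbol $[\,\cdot:p]$ for each $p\in\mathbb H_d$. Theory $\mathrm{PQM}_d$ (over $\mathcal L_d$) has the following axioms, for all $p,q\in\mathbb H_d$ and $U\in\mathbb U_d$: ($\neg\bot$) $\exists x\,\neg[x:\bot]$; ($\top$) $\forall x\,[x:\top]$;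 ($\le$) if $p\le q$: $\forall x\,([x:p]\to[x:q])$; ($\wedge$) if $p,q$ are compatible: $\forall x\,([x:p]\wedge[x:q]\to[x:p\wedge q])$; ($\pi_i$) $\forall x\,([x:p]\to[\pi_q(x):p\,\&\,q])$; ($\pi_c$) if $p\le q$: $\forall x\,([\pi_p(\pi_q(x)):\bot]\to[\pi_p(x):\bot])$; ($\pi_\bot$) $\forall x\,([\pi_q(x):\bot]\to[x:q^\bot])$; ($u_i$) $\forall x\,([x:p]\to[u_U(x):U(p)])$; ($u_e$) $\forall x\,([u_U(x):p]\to[x:U^{-1}(p)])$. *)

From HB Require Import structures.
From mathcomp Require Import all_boot all_order all_algebra all_field.
From mathcomp Require Import complex reals.

Set Implicit Arguments.
Unset Strict Implicit.
Unset Printing Implicit Defensive.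

Import Order.TTheory GRing.Theory Num.Theory.
Local Open Scope ring_scope.

Definition cvec (R : realType) (d : nat) := 'rV[R[i]]_d.

(* H_d : complex linear subspaces of C^d *)
Definition subsp (R : realType) (d : nat) := {vspace cvec R d}.

Definition dotv (R : realType) (d : nat) (u v : cvec R d) : R[i] :=
  \sum_(k < d) u 0 k * (v 0 k)^*.

(* Gram-type matrix of the canonical basis of U: column i is conj of the
   i-th basis vector of U (padded by zeros); v *m ocompl_mx U has entries
   <v, b_i>. *)
Definition ocompl_mx (R : realType) (d : nat) (U : subsp R d) : 'M[R[i]]_d :=
  \matrix_(k < d, i < d) (((vbasis U)`_i : cvec R d) 0 k)^*.

Definition ocompl (R : realType) (d : nat) (U : subsp R d) : subsp R d :=
  lker (linfun (mulmxr (ocompl_mx U))).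

Definition sasaki (R : realType) (d : nat) (p q : subsp R d) : subsp R d :=
  (q :&: (ocompl q + p))%VS.

Definition compatible (R : realType) (d : nat) (p q : subsp R d) : Prop :=
  p = ((p :&: q) + (p :&: ocompl q))%VS.

(* V_d : rays (one-dimensional subspaces) *)
Definition ray (R : realType) (d : nat) (p : subsp R d) : Prop := \dim p = 1%N.

Definition unitary_mx (R : realType) (d : nat) (U : 'M[R[i]]_d) : bool :=
  U *m (map_mx (@Num.conj _) U)^T == 1%:M.

Definition unitary (R : realType) (d : nat) := {U : 'M[R[i]]_d | unitary_mx U}.

(* the operator with matrix A acting on v : A v = (A *m v^T)^T = v *m A^T
   (see mx_actE); written with mulmxr so that it is canonically linear *)
Definition mx_act (R : realType) (d : nat) (A : 'M[R[i]]_d) :=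
  @mulmxr _ 1 d d (A^T : 'M[R[i]]_d).

Lemma mx_actE (R : realType) (d : nat) (A : 'M[R[i]]_d) (v : cvec R d) :
  mx_act A v = (A *m v^T)^T.
Proof. by rewrite /mx_act /= trmx_mul trmxK. Qed.

Definition uimg (R : realType) (d : nat) (U : unitary R d) (p : subsp R d)
  : subsp R d := (linfun (mx_act (val U)) @: p)%VS.

Definition uimg_inv (R : realType) (d : nat) (U : unitary R d) (p : subsp R d)
  : subsp R d := (linfun (mx_act (invmx (val U))) @: p)%VS.

(* A model of PQM_d (language L_d without equality and constants):
   a domain, interpretations of the function symbols u_U, pi_q and of the
   relation symbols [ . : p ], satisfying all axioms of PQM_d. *)
Record PQM_model (R : realType) (d : nat) := {
  carrier :> Type;
  u_ : unitary R d -> carrier -> carrier;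
  pi_ : subsp R d -> carrier -> carrier;
  sat : carrier -> subsp R d -> Prop;   (* sat x p  <->  [x : p] *)
  ax_nbot : exists x, ~ sat x 0%VS;
  ax_top : forall x, sat x fullv;
  ax_le : forall p q : subsp R d, (p <= q)%VS -> forall x, sat x p -> sat x q;
  ax_wedge : forall p q : subsp R d, compatible p q ->
    forall x, sat x p -> sat x q -> sat x (p :&: q)%VS;
  ax_pi_i : forall (p q : subsp R d) x, sat x p -> sat (pi_ q x) (sasaki p q);
  ax_pi_c : forall p q : subsp R d, (p <= q)%VS ->
    forall x, sat (pi_ p (pi_ q x)) 0%VS -> sat (pi_ p x) 0%VS;
  ax_pi_bot : forall (q : subsp R d) x, sat (pi_ q x) 0%VS -> sat x (ocompl q);
  ax_u_i : forall (p : subsp R d) (U : unitary R d) x,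
    sat x p -> sat (u_ U x) (uimg U p);
  ax_u_e : forall (p : subsp R d) (U : unitary R d) x,
    sat (u_ U x) p -> sat x (uimg_inv U p)
}.

From HB Require Import structures.
From mathcomp Require Import all_boot all_order all_algebra all_field.
From mathcomp Require Import complex reals.
Import GRing.Theory Num.Theory.
Set Implicit Arguments.
Unset Strict Implicit.
Local Open Scope ring_scope.

(* For a ray [W] spanned by [w] and [x \in kappa m] with <x, w> != 0, axiom
   (pi_i) gives [kappa (pi_W m) <= W], and [kappa (pi_W m)] is not [0] since by
   (pi_bot) that would put [x] in [W^bot]; hence [kappa (pi_W m) = W].  Take
   [m0] with [kappa m0 <> 0] (axiom not-bot) and [x \in kappa m0]: a target
   ray spanned by [y] is reached by two projections, through a line [<[z]>]
   with <x, z> != 0 and <z, y> != 0 ([z := y] or [z := x + y]). *)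

Section InnerProduct.

Variables (R : realType) (d : nat).
Implicit Types (x u w : cvec R d) (U V : subsp R d).

Lemma dimv_le_dim U : (\dim U <= d)%N.
Proof. by have := dimvS (subvf U); rewrite dimvf /dim /= mul1n. Qed.

Lemma dotvDl x u w : dotv (u + w) x = dotv u x + dotv w x.
Proof.
rewrite /dotv -big_split /=; apply: (@eq_bigr _ _ _ (ordinal d)) => k _.
by rewrite (@mxE _ 1 d) mulrDl.
Qed.

Lemma dotvDr x u w : dotv x (u + w) = dotv x u + dotv x w.
Proof.
rewrite /dotv -big_split /=; apply: (@eq_bigr _ _ _ (ordinal d)) => k _.
by rewrite (@mxE _ 1 d) rmorphD mulrDr.
Qed.

Lemma dotv0r x : dotv x 0 = 0.
Proof. by rewrite /dotv big1 // => k _; rewrite (@mxE _ 1 d) rmorph0 mulr0. Qed.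

Lemma dotvv_eq0 x : (dotv x x == 0) = (x == 0).
Proof.
apply/eqP/eqP => [hxx|->]; last by rewrite dotv0r.
have hsum : \sum_(k < d) `|x 0 k| ^+ 2 = 0.
  by rewrite -{}[RHS]hxx; apply: (@eq_bigr _ _ _ (ordinal d)) => k _; rewrite normCK.
apply/rowP => k; rewrite mxE.
have /eqP := @psumr_eq0P _ _ _ _ (fun j _ => exprn_ge0 2 (normr_ge0 (x 0 j))) hsum k isT.
by rewrite sqrf_eq0 normr_eq0 => /eqP.
Qed.

Lemma dotv_bridge x y : x != 0 -> y != 0 ->
  exists z, dotv x z != 0 /\ dotv z y != 0.
Proof.
move=> x0 y0; have [xy0|xyN0] := eqVneq (dotv x y) 0.
  exists (x + y).
  by rewrite dotvDr dotvDl xy0 addr0 add0r !dotvv_eq0.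
by exists y; rewrite xyN0 dotvv_eq0.
Qed.

(* Column [i] of [ocompl_mx U] is the conjugate of the [i]-th basis vector of
   [U], so membership in [ocompl U] kills the inner product with that basis. *)
Lemma ocompl_dotv x u U : x \in ocompl U -> u \in U -> dotv x u = 0.
Proof.
rewrite /ocompl memv_ker lfunE /= => /eqP hx hu.
have hbasis (i : 'I_d) : \sum_k x 0 k * (((vbasis U)`_i : cvec R d) 0 k)^* = 0.
  have := congr1 (fun A : 'M_(1, d) => A 0 i) hx.
  by rewrite !mxE; under eq_bigr do rewrite mxE.
rewrite /dotv (coord_vbasis hu).
under eq_bigr => k _ do rewrite summxE rmorph_sum mulr_sumr.
rewrite exchange_big /= big1 // => i _.
under eq_bigr => k _ do rewrite mxE rmorphM mulrCA.
by rewrite -mulr_sumr (hbasis (widen_ord (dimv_le_dim U) i)) mulr0.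
Qed.

Lemma ray_subv_eq U V : ray V -> (U <= V)%VS -> U != 0%VS -> U = V.
Proof.
rewrite /ray => hV hUV hU; apply/eqP.
by rewrite eqEdim hUV hV lt0n dimv_eq0.
Qed.

End InnerProduct.

Section Projection.

Variables (R : realType) (d : nat) (M : PQM_model R d) (kappa : M -> subsp R d).
Hypothesis hkappa : forall (m : M) (p : subsp R d), sat m p <-> (kappa m <= p)%VS.

Lemma kappa_neq0_sat (m : M) : ~ sat m 0%VS -> kappa m != 0%VS.
Proof. by move=> hm; apply/eqP => k0; apply: hm; apply/hkappa; rewrite k0. Qed.

Lemma kappa_pi_ray (m : M) (W : subsp R d) (x w : cvec R d) :
  ray W -> x \in kappa m -> w \in W -> dotv x w != 0 -> kappa (pi_ W m) = W.
Proof.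
move=> hW hx hw xw0.
have /hkappa hpi := ax_pi_i W (iffRL (hkappa m _) (subvv (kappa m))).
apply: ray_subv_eq hW (subv_trans hpi (capvSl _ _)) _.
apply: kappa_neq0_sat => /ax_pi_bot/hkappa/subvP hperp.
by move: xw0; rewrite (ocompl_dotv (hperp x hx) hw) eqxx.
Qed.

End Projection.

Theorem mainTheorem13 (R : realType) (d : nat) (hd : (3 <= d)%N)
  (M : PQM_model R d) (kappa : M -> subsp R d)
  (hkappa : forall (m : M) (p : subsp R d), sat m p <-> (kappa m <= p)%VS) :
  forall v : subsp R d, ray v -> exists m : M, kappa m = v.
Proof.
move=> v hv.
have [m0 /(kappa_neq0_sat hkappa) hm0] := ax_nbot M.
have hv0 : v != 0%VS by apply/eqP => v0; move: hv; rewrite /ray v0 dimv0.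
have [z [xz0 zy0]] :
    exists z, dotv (vpick (kappa m0)) z != 0 /\ dotv z (vpick v) != 0.
  by apply: dotv_bridge; rewrite vpick0.
have z0 : z != 0 by apply: contraNneq xz0 => ->; rewrite dotv0r.
have hz : ray <[z]>%VS by rewrite /ray dim_vline z0.
have hzm : z \in kappa (pi_ <[z]>%VS m0).
  by rewrite (kappa_pi_ray hkappa hz (memv_pick _) (memv_line z) xz0) memv_line.
exists (pi_ v (pi_ <[z]>%VS m0)).
exact (kappa_pi_ray hkappa hv hzm (memv_pick v) zy0).
Qed.
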